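(* Let $P$ be a real signed permutation matrix (of any size $n\times n$) all of whose eigenvalues lie in the closed left half-plane $\{z\in\mathbb{C}:\operatorname{Re} z\le 0\}$. Then $P = R - E$, where $R$ is a real skew-symmetric matrix ($R^T=-R$) and $E$ is a diagonal matrix each of whose diagonal entries equals $0$ or $1$.
   Context: A real signed permutation matrix is a square matrix with all entries in $\{-1,0,+1\}$ having exactly one nonzero entry in each row and in each column. *)

(* matrices over an arbitrary real closed field R
   (e.g. the real numbers), complex numbers R[i] from mathcomp-real-closed. *)
From HB Require Import structures.
From mathcomp Require Import all_boot all_order all_algebra.
From mathcomp Require Export complex.
Set Implicit Arguments. Unset Strict Implicit. Unset Printing Implicit Defensive.
Import Order.TTheory GRing.Theory Num.Theory.
Local Open Scope ring_scope.

Definition signed_perm_mx (R : numDomainType) (n : nat) (P : 'M[R]_n) : Prop :=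
  [/\ forall i j, P i j \in [:: -1; 0; 1],
      forall i, #|[set j | P i j != 0]| = 1%N
    & forall j, #|[set i | P i j != 0]| = 1%N].

Definition cplx_mx (R : rcfType) (n : nat) (A : 'M[R]_n) : 'M[R[i]]_n :=
  map_mx (fun x => x%:C%C) A.

From HB Require Import structures.
From mathcomp Require Import all_boot all_order all_algebra fingroup perm.
From mathcomp Require Import complex ring.
Set Implicit Arguments. Unset Strict Implicit. Unset Printing Implicit Defensive.
Import Order.TTheory GRing.Theory Num.Theory.
Local Open Scope ring_scope.

(* A signed permutation matrix is a permutation [sg] with a sign attached to
   each row.  On each cycle of [sg], of length [k] and sign product [S],
   every [k]-th root of [S] is an eigenvalue.  Eigenvalues in the closed left
   half-plane therefore force [S = -1] (otherwise [1] is an eigenvalue) and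
   [k <= 2] (otherwise some [k]-th root of [-1] has positive real part).  So
   fixed points carry the sign [-1] and the two entries of a 2-cycle have
   opposite signs: off the diagonal [P] is skew-symmetric, and its diagonal
   has entries in {0, -1}. *)

Section RootsOfUnity.
Variable C : numClosedFieldType.

(* A root [w] of [1 + X + ... + X^(k-1)] satisfies [w^k = 1] and
   [\sum_(i < k) w^i = 0]; as the term [w^0 = 1] is positive, some [w^i]
   has negative real part. *)
Lemma unity_root_Re_lt0 k : (1 < k)%N -> exists2 w : C, w ^+ k = 1 & 'Re w < 0.
Proof.
move=> k_gt1; have [|w /eqP sum_w0] := closed_rootP (\poly_(i < k) (1 : C)) _.
  by rewrite size_poly_eq ?oner_eq0 // -(subnKC k_gt1).
rewrite horner_poly (eq_bigr _ (fun _ _ => mul1r _)) in sum_w0.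
have wk1 : w ^+ k = 1 by apply/eqP; rewrite -subr_eq0 subrX1 sum_w0 mulr0.
suff /existsP[i Re_wi_lt0] : [exists i : 'I_k, 'Re (w ^+ i) < 0].
  by exists (w ^+ i); rewrite // exprAC wk1 expr1n.
apply: contra_eqT (congr1 (fun z : C => 'Re z) sum_w0) => /existsPn Re_ge0.
rewrite /= raddf_sum raddf0 /= (bigD1 (Ordinal (ltnW k_gt1))) //=.
rewrite (Creal_ReP _ _) ?rpred1 // gt_eqF ?ltr_wpDr ?ltr01 //.
by apply: sumr_ge0 => i _; rewrite real_leNgt ?rpred0.
Qed.

Lemma sqrt_Re_gt0 (b : C) :
  b \isn't Num.real -> exists2 w : C, w ^+ 2 = b & 0 < 'Re w.
Proof.
move=> b_nreal; have sqrt_b := sqrtCK b; set r := sqrtC b in sqrt_b *.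
have : 'Re r != 0.
  apply: contra b_nreal => /eqP Re_r0.
  rewrite -sqrt_b (Crect r) Re_r0 add0r exprMn sqrCi mulN1r.
  by rewrite rpredN rpredX // Creal_Im.
rewrite real_neqr_lt ?Creal_Re ?rpred0 // => /orP[Re_r_lt0|]; last by exists r.
by exists (- r); rewrite ?sqrrN // raddfN oppr_gt0.
Qed.

(* Odd [k]: negate a root of unity with negative real part.  Even [k = 2 m]:
   take a square root with positive real part of a non-real [m]-th root of
   [-1], which is [i] when [m = 2] and comes from induction when [m > 2]. *)
Lemma root_N1_Re_gt0 k : (2 < k)%N -> exists2 w : C, w ^+ k = -1 & 0 < 'Re w.
Proof.
elim/ltn_ind: k => k IHk k_gt2; have [k_odd|k_even] := boolP (odd k).
  have [z zk1 Re_z_lt0] := @unity_root_Re_lt0 k (ltnW k_gt2).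
  exists (- z); last by rewrite raddfN oppr_gt0.
  by rewrite exprNn zk1 mulr1 -signr_odd k_odd.
have k_eq : k = (2 * k./2)%N.
  by rewrite mul2n -{1}(odd_double_half k) (negPf k_even).
suff [b bm b_nreal] : exists2 b : C, b ^+ k./2 = -1 & b \isn't Num.real.
  have [w w2 Re_w] := sqrt_Re_gt0 b_nreal.
  by exists w; rewrite // k_eq exprM w2.
have [m_le2|m_gt2] := leqP k./2 2.
  have -> : k./2 = 2%N.
    by apply/eqP; rewrite eqn_leq m_le2 -(ltn_pmul2l (isT : 0 < 2)%N) -k_eq.
  by exists 'i; rewrite ?sqrCi // realEsqr sqrCi oppr_ge0 ler10.
have [|b bm Re_b] := IHk k./2 _ m_gt2.
  by rewrite {2}k_eq ltn_Pmull // (ltn_trans _ m_gt2).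
exists b => //; apply/negP => b_real.
move: Re_b; rewrite (Creal_ReP _ b_real) => /(exprn_gt0 k./2).
by rewrite bm ltr0N1.
Qed.

End RootsOfUnity.

Lemma cards1_pick (T : finType) (p : pred T) (x0 : T) :
  #|[set x | p x]| = 1%N -> forall x, p x = (x == odflt x0 [pick y | p y]).
Proof.
move=> /eqP/cards1P[y p_y] x; have pE z : p z = (z == y) by rewrite -in_set1 -p_y inE.
by case: pickP => [z|/(_ y)]; rewrite !pE ?eqxx // => /eqP->.
Qed.

Lemma signed_perm_mx_decomp (R : numDomainType) n (P : 'M[R]_n) :
  signed_perm_mx P ->
  exists (sg : {perm 'I_n}) (s : 'I_n -> R),
    (forall x, s x = 1 \/ s x = -1) /\
    (forall x y, P x y = if y == sg x then s x else 0).
Proof.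
case=> P_sign P_row P_col; pose f i := odflt i [pick j | P i j != 0].
have P_neq0 i j : (P i j != 0) = (j == f i) by exact: cards1_pick (P_row i) j.
have f_inj : injective f.
  move=> i1 i2 f12; have col_eq := cards1_pick i1 (P_col (f i1)).
  have /eqP-> : i1 == odflt i1 [pick i | P i (f i1) != 0] by rewrite -col_eq P_neq0.
  by apply/esym/eqP; rewrite -col_eq P_neq0 f12.
exists (perm f_inj), (fun x => P x (f x)); split=> [x|x y].
  have := P_sign x (f x); have : P x (f x) != 0 by rewrite P_neq0.
  by rewrite !inE => /negPf-> /orP[] /eqP; [right|left].
by rewrite permE; case: eqVneq => [->//|/negbTE]; rewrite -P_neq0 => /negbFE/eqP.
Qed.

Section MonomialMatrixEigenvalues.
Variables (F : fieldType) (n : nat) (sg : {perm 'I_n}) (t : 'I_n -> F).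
Variable A : 'M[F]_n.
Hypothesis t_neq0 : forall x, t x != 0.
Hypothesis A_def : forall x y, A x y = if y == sg x then t x else 0.

(* With [k] the length of the cycle of [x] and [c m] the product of the
   first [m] weights along it, the row vector supported on the cycle with
   entry [c m * l ^+ (k - m)] at [sg^m x] is a left eigenvector. *)
Lemma eigenvalue_monomial_mx_cycle x l :
  l ^+ fingraph.order sg x = \prod_(m < fingraph.order sg x) t (iter m sg x) ->
  eigenvalue A l.
Proof.
set k := fingraph.order sg x => lk.
pose c m := \prod_(i < m) t (iter i sg x) * l ^+ (k - m).
pose v := \row_y (if fconnect sg x y then c (findex sg x y) else 0).
have v_sg z : l * v 0 (sg z) = v 0 z * t z.
  rewrite !mxE -(same_fconnect1_r (@perm_inj _ sg)).
  have [xz|] := boolP (fconnect sg x z); last by rewrite mul0r mulr0.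
  have := findex_max xz; have := iter_findex xz; set m := findex sg x z.
  rewrite -/k leq_eqVlt => z_eq /orP[/eqP m_eq|m_lt].
    have -> : sg z = x by rewrite -z_eq -iterS m_eq (iter_order (@perm_inj _ sg)).
    rewrite findex0 /c big_ord0 mul1r subn0 lk -m_eq big_ord_recr /= z_eq.
    by rewrite subSnn expr1; ring.
  have -> : findex sg x (sg z) = m.+1 by rewrite -z_eq -iterS findex_iter.
  by rewrite /c big_ord_recr /= z_eq -(subnSK (ltnW m_lt)) exprS; ring.
apply/eigenvalueP; exists v.
  apply/rowP => y; rewrite mxE [RHS]mxE (bigD1 (sg^-1 y)%g) //= big1 => [|z z_neq].
    by rewrite A_def permKV eqxx addr0 -v_sg permKV.
  rewrite A_def; case: eqP => [y_eq|]; last by rewrite mulr0.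
  by move: z_neq; rewrite y_eq permK eqxx.
apply/eqP => /rowP/(_ x); rewrite !mxE connect0 findex0 /c big_ord0 mul1r subn0.
by apply/eqP; rewrite lk; apply/prodf_neq0.
Qed.

End MonomialMatrixEigenvalues.

Section LeftHalfPlaneSpectrum.
Variables (R : rcfType) (n : nat) (P : 'M[R]_n).
Variables (sg : {perm 'I_n}) (s : 'I_n -> R).
Hypothesis s_sign : forall x, s x = 1 \/ s x = -1.
Hypothesis P_def : forall x y, P x y = if y == sg x then s x else 0.
Hypothesis Re_eig_le0 :
  forall z : R[i], eigenvalue (cplx_mx P) z -> complex.Re z <= 0.

Let cycle_sign x := \prod_(m < fingraph.order sg x) s (iter m sg x).

Lemma cycle_eigenvalue x (l : R[i]) :
  l ^+ fingraph.order sg x = (cycle_sign x)%:C%C -> eigenvalue (cplx_mx P) l.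
Proof.
rewrite rmorph_prod => lk.
apply: (eigenvalue_monomial_mx_cycle (t := fun y => (s y)%:C%C) _ _ lk).
  by move=> y; rewrite eq_complex /= negb_and; case: (s_sign y) => ->;
    rewrite ?oppr_eq0 oner_eq0.
by move=> y z; rewrite mxE P_def; case: eqP.
Qed.

Lemma cycle_sign_N1 x : cycle_sign x = -1.
Proof.
have : cycle_sign x = 1 \/ cycle_sign x = -1.
  apply: (big_ind (fun a : R => a = 1 \/ a = -1)) => [|a b|m _];
    [by left| |exact: s_sign].
  by case=> -> [] ->; rewrite ?mulr1 ?mulrN1 ?opprK; by [left|right].
case=> // sign1; suff : complex.Re (1 : R[i]) <= 0 by rewrite ler10.
by apply/Re_eig_le0/(cycle_eigenvalue (x := x)); rewrite expr1n sign1.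
Qed.

Lemma cycle_order_le2 x : (fingraph.order sg x <= 2)%N.
Proof.
rewrite leqNgt; apply/negP => /(@root_N1_Re_gt0 R[i])[w wk Re_w_gt0].
suff : complex.Re w <= 0 by rewrite leNgt -ltcR complexRe Re_w_gt0.
by apply/Re_eig_le0/(cycle_eigenvalue (x := x)); rewrite wk cycle_sign_N1 rmorphN1.
Qed.

Lemma cycle_cases x :
  (sg x = x /\ s x = -1) \/ [/\ sg x != x, sg (sg x) = x & s (sg x) = - s x].
Proof.
have := cycle_sign_N1 x; have := iter_order (@perm_inj _ sg) x.
have := orbit_uniq sg x; have := cycle_order_le2 x; have := fingraph.order_gt0 sg x.
rewrite /cycle_sign /fingraph.orbit; case: (fingraph.order sg x) => [|[|[|]]] //= _ _.
  by rewrite big_ord1 => _ -> ->; left.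
rewrite inE andbT eq_sym big_ord_recr big_ord1 /= => sgx_neq sg2 s_prod.
have s_x2 : s x * s x = 1 by case: (s_sign x) => ->; rewrite ?mulr1 ?mulrNN ?mulr1.
by right; split; rewrite // -[s (sg x)]mul1r -s_x2 -mulrA s_prod mulrN1.
Qed.

Lemma signed_perm_mx_diag x : P x x = 0 \/ P x x = -1.
Proof.
rewrite P_def eq_sym.
by case: (cycle_cases x) => [[-> ->]|[/negbTE-> _ _]]; [rewrite eqxx; right|left].
Qed.

Lemma signed_perm_mx_skew x y : x != y -> P y x = - P x y.
Proof.
move=> x_neq_y; rewrite !P_def.
have [y_eq|y_neq] := eqVneq y (sg x).
  case: (cycle_cases x) => [[sgx _]|[_ sg2 s_sg]].
    by move: x_neq_y; rewrite y_eq sgx eqxx.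
  by rewrite y_eq sg2 !eqxx s_sg.
case: eqVneq => [x_eq|]; last by rewrite oppr0.
case: (cycle_cases y) y_neq => [[sgy _]|[_ sg2 _]];
  by rewrite x_eq ?sgy ?sg2 eqxx.
Qed.

End LeftHalfPlaneSpectrum.

Theorem lemma1 (R : rcfType) (n : nat) (P : 'M[R]_n) :
  signed_perm_mx P ->
  (forall z : R[i], eigenvalue (cplx_mx P) z -> complex.Re z <= 0) ->
  exists (S E : 'M[R]_n),
    [/\ S^T = - S,
        is_diag_mx E,
        forall k, E k k = 0 \/ E k k = 1
      & P = S - E].
Proof.
move=> /signed_perm_mx_decomp[sg [s [s_sign P_def]]] Re_eig_le0.
have P_diag := signed_perm_mx_diag s_sign P_def Re_eig_le0.
have P_skew := signed_perm_mx_skew s_sign P_def Re_eig_le0.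
pose E := diag_mx (\row_k - P k k).
exists (P + E), E; split; last by rewrite addrK.
- apply/matrixP => x y; rewrite !mxE; have [->|x_neq_y] := eqVneq x y.
    by rewrite mulr1n subrr oppr0.
  by rewrite (P_skew _ _ x_neq_y) /= !mulr0n !addr0.
- exact: diag_mx_is_diag.
- move=> k; rewrite !mxE eqxx mulr1n.
  by case: (P_diag k) => ->; rewrite ?oppr0 ?opprK; [left|right].
Qed.
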